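(* For $n\ge1$ let $$p_n(t)=\sum_{\tau\in T_n}t^{\,n-v(\tau)},$$ where $v(\tau)$ is the number of internal vertices of $\tau$. This is the Poincaré polynomial of the Stasheff polytope $\mathcal K^{n-1}$, counting its cells by dimension. Let $$f^{\mathcal K}_t(x)=\sum_{n\ge1}(-1)^n p_n(t)\,x^n.$$ Then $$f^{\mathcal K}_t(x)=\frac{-(1+(2+t)x)+\sqrt{1+2(2+t)x+t^2x^2}}{2(1+t)x}.$$ Equivalently, $f^{\mathcal K}_t$ is the compositional inverse of $$f^{\Delta}_t(x)=\sum_{n\ge1}(-1)^n\frac{(1+t)^n-1}{t}\,x^n=\frac{-x}{(1+x)(1+(1+t)x)},$$ i.e. $f^{\Delta}_t(f^{\mathcal K}_t(x))=x$.
   Context: $T_n$ ($n\ge1$) is the set of planar rooted trees with $n+1$ leaves in which every internal vertex has at least two inputs. In particular, binary trees have $n$ internal vertices and the corolla has one. *)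

(* Formal power series in x with coefficients in Q[t] = {poly rat},
   represented as coefficient functions nat -> {poly rat}; t is 'X. *)
From HB Require Import structures.
From mathcomp Require Import all_boot all_order all_algebra.
From Stdlib Require List.
Set Implicit Arguments. Unset Strict Implicit. Unset Printing Implicit Defensive.
Import Order.TTheory GRing.Theory Num.Theory.
Local Open Scope ring_scope.

Inductive tree : Type := Node of seq tree.

Fixpoint leaves (t : tree) : nat :=
  match t with
  | Node [::] => 1
  | Node ts => sumn (map leaves ts)
  end.

Fixpoint internal (t : tree) : nat :=
  match t with
  | Node [::] => 0
  | Node ts => (sumn (map internal ts)).+1
  end.

Fixpoint valid (t : tree) : bool :=
  match t with
  | Node [::] => true
  | Node ts => (2 <= size ts)%N && all valid ts
  end.

Definition in_T (n : nat) (t : tree) : Prop := valid t /\ leaves t = n.+1.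

Definition enumerates (n : nat) (s : seq tree) : Prop :=
  List.NoDup s /\ forall t, List.In t s <-> in_T n t.

Definition pK (n : nat) (s : seq tree) : {poly rat} :=
  \sum_(tau <- s) 'X^(n - internal tau).

Definition series := nat -> {poly rat}.

Definition smul (F G : series) : series :=
  fun n => \sum_(i < n.+1) F i * G (n - i)%N.

Definition sone : series := fun n => if n is 0 then 1 else 0.

Definition spow (F : series) (k : nat) : series := iter k (smul F) sone.

(* composition F(G(x)), meaningful when G 0 = 0 *)
Definition scomp (F G : series) : series :=
  fun n => \sum_(k < n.+1) F k * spow G k n.

Definition sx : series := fun n => if n == 1%N then 1 else 0.

Definition fDelta : series :=
  fun n => if n is 0 then 0 else (-1) ^+ n * (((1 + 'X) ^+ n - 1) %/ 'X).

(* A tree with at least two leaves is a root with k >= 2 subtrees, and the root contributes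
   t^(k-2) to the weight t^(n - v) of its cell.  So the series B(x) = sum_tau t^(n - v(tau)) x^(n+1)
   satisfies B = x + sum_(k >= 2) t^(k-2) B^k = x + B^2 / (1 - t B).  Substituting x -> -x, where
   B(-x) = -x (1 + f^K(x)), turns this into  x (1 + F) (1 + (1 + t) F) = -F  for F = f^K.
   Completing the square in this quadratic gives the square-root formula, and since
   t f^Delta(y) = 1/(1 + (1 + t) y) - 1/(1 + y) = -t y / ((1 + y)(1 + (1 + t) y)),
   it also says exactly that f^Delta(F) = x.  All series identities are proved coefficientwise, on
   truncations modulo x^N in Q[t][x]. *)

From HB Require Import structures.
From mathcomp Require Import all_boot all_order all_algebra.
From Stdlib Require List.
From Stdlib Require Import Setoid Morphisms.
From mathcomp Require Import zify ring.
Import Order.TTheory GRing.Theory Num.Theory.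
Set Implicit Arguments. Unset Strict Implicit. Unset Printing Implicit Defensive.
Local Open Scope ring_scope.

(** * Planar trees *)

Definition tree_ind_In (P : tree -> Prop)
    (IH : forall ts, (forall t, List.In t ts -> P t) -> P (Node ts)) : forall t, P t :=
  fix loop t := let: Node ts := t in IH ts
    ((fix loop_in ts : forall u, List.In u ts -> P u :=
       match ts with
       | [::] => fun u (F : False) => False_ind _ F
       | t' :: ts' => fun u in_u => match in_u with
                                   | or_introl e => eq_ind t' P (loop t') u e
                                   | or_intror in_u' => loop_in ts' u in_u'
                                   end
       end) ts).

Fixpoint tree_code (t : tree) : GenTree.tree unit :=
  let: Node ts := t in GenTree.Node 0 (map tree_code ts).

Fixpoint tree_decode (g : GenTree.tree unit) : tree :=
  match g with
  | GenTree.Leaf _ => Node [::]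
  | GenTree.Node _ gs => Node (map tree_decode gs)
  end.

Lemma tree_codeK : cancel tree_code tree_decode.
Proof.
elim/tree_ind_In => ts IH /=; congr Node.
elim: ts IH => //= t ts IHts IH; rewrite IH; last by left.
by rewrite IHts // => u in_u; apply: IH; right.
Qed.

HB.instance Definition _ := Countable.copy tree (can_type tree_codeK).

Lemma In_mem (T : eqType) (x : T) (s : seq T) : List.In x s <-> x \in s.
Proof.
elim: s => [|y s IH] //=; rewrite in_cons.
split=> [[->|/IH->]|/orP[/eqP->|/IH]]; rewrite ?eqxx ?orbT; auto.
Qed.

Lemma NoDup_uniq (T : eqType) (s : seq T) : List.NoDup s -> uniq s.
Proof.
elim=> //= x {}s x_notin _ ->; rewrite andbT.
by apply/negP => /In_mem.
Qed.

Lemma tree_ind_mem (P : tree -> Prop) :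
  (forall ts, {in ts, forall t, P t} -> P (Node ts)) -> forall t, P t.
Proof. by move=> IH; elim/tree_ind_In => ts IHts; apply: IH => t /In_mem /IHts. Qed.

Definition leaf : tree := Node [::].

Lemma leaves_gt0 t : (0 < leaves t)%N.
Proof. by elim/tree_ind_mem: t => -[|t ts] IH //=; have := IH t (mem_head _ _); lia. Qed.

Lemma size_le_sumn_leaves (f : seq tree) : (size f <= sumn (map leaves f))%N.
Proof. by elim: f => //= t f; have := leaves_gt0 t; lia. Qed.

Lemma leaves_node (f : seq tree) : f != [::] -> leaves (Node f) = sumn (map leaves f).
Proof. by case: f. Qed.

Lemma valid_node (f : seq tree) : f != [::] -> valid (Node f) = (2 <= size f)%N && all valid f.
Proof. by case: f. Qed.

Lemma internal_lt_leaves t : valid t -> (internal t < leaves t)%N.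
Proof.
elim/tree_ind_mem: t => -[//|t ts] IH /andP[size_ge2 /allP valid_ts].
have lt_ts : all (fun u => internal u < leaves u)%N (t :: ts).
  by apply/allP => u u_in; exact: IH (valid_ts u u_in).
have : (sumn (map internal (t :: ts)) + size (t :: ts) <= sumn (map leaves (t :: ts)))%N.
  by elim: (t :: ts) lt_ts => //= u us IHus /andP[lt_u /IHus]; lia.
by move: size_ge2 => /=; lia.
Qed.

Lemma valid_leaves1 t : valid t -> leaves t = 1%N -> t = leaf.
Proof.
case: t => -[//|t f]; rewrite valid_node // leaves_node // => /andP[size_ge2 _].
by have := size_le_sumn_leaves (t :: f); move: size_ge2; lia.
Qed.

(* On T_n, whose trees have n+1 leaves, this is t^(n - v) with v the number of internal vertices. *)
Definition tree_weight (t : tree) : {poly rat} := 'X^(leaves t - 1 - internal t).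

Lemma tree_weight_node (f : seq tree) : (2 <= size f)%N -> all valid f ->
  tree_weight (Node f) = 'X^(size f - 2) * \prod_(t <- f) tree_weight t.
Proof.
case: f => [//|t0 f0] size_ge2 valid_f; rewrite /tree_weight prodrXr -exprD; congr ('X^_).
have : (sumn (map leaves (t0 :: f0)) = \sum_(t <- t0 :: f0) (leaves t - 1 - internal t)
         + size (t0 :: f0) + sumn (map internal (t0 :: f0)))%N.
  elim: (t0 :: f0) valid_f => [|t f IH] /=; first by rewrite big_nil.
  case/andP=> /internal_lt_leaves lt_t /IH ->; rewrite big_cons; lia.
by rewrite /=; move: size_ge2 => /=; lia.
Qed.

(** * Forests and the recurrence for weighted tree counts *)

Lemma uniq_flatten_key (A B : eqType) (key : B -> A) (s : seq A) (g : A -> seq B) :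
  uniq s -> {in s, forall a, uniq (g a)} -> {in s, forall a, {in g a, forall y, key y = a}} ->
  uniq (flatten (map g s)).
Proof.
elim: s => //= a s IH /andP[a_notin uniq_s] uniq_g key_g.
rewrite cat_uniq uniq_g ?mem_head // IH //; last 2 first.
- by move=> b b_in; apply: uniq_g; rewrite inE b_in orbT.
- by move=> b b_in; apply: key_g; rewrite inE b_in orbT.
rewrite andbT; apply/hasPn => y /flatten_mapP[b b_in y_in]; apply/negP => y_in_a.
have key_b : key y = b by apply: key_g y_in; rewrite inE b_in orbT.
by move: a_notin; rewrite -(key_g a (mem_head _ _) y y_in_a) key_b b_in.
Qed.

Lemma sum_ord_widen (V : nmodType) m n (F : nat -> V) :
  (m <= n)%N -> (forall k, (m <= k < n)%N -> F k = 0) -> \sum_(k < m) F k = \sum_(k < n) F k.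
Proof.
move=> le_mn F0; rewrite (big_ord_widen _ _ le_mn) big_mkcond /=.
by apply: eq_bigr => k _; case: ltnP => // le_mk; rewrite F0 // le_mk ltn_ord.
Qed.

Lemma spowS (F : series) k : spow F k.+1 = smul F (spow F k).
Proof. by []. Qed.

Section Forests.

Variable T : nat -> seq tree.

Fixpoint forests (k m : nat) : seq (seq tree) :=
  if k is k'.+1 then
    flatten [seq [seq t :: f | t <- T j, f <- forests k' (m - j)] | j <- index_iota 0 m.+1]
  else if m == 0%N then [:: [::]] else [::].
Arguments forests : simpl never.

Lemma forests0 m : forests 0 m = if m == 0%N then [:: [::]] else [::].
Proof. by []. Qed.

Lemma forestsS k m :
  forests k.+1 m =
  flatten [seq [seq t :: f | t <- T j, f <- forests k (m - j)] | j <- index_iota 0 m.+1].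
Proof. by []. Qed.

Definition wsum : series := fun m => \sum_(t <- T m) tree_weight t.

Lemma sum_forests k m :
  \sum_(f <- forests k m) \prod_(t <- f) tree_weight t = spow wsum k m.
Proof.
elim: k m => [|k IH] m.
  by rewrite forests0; case: m => [|m]; rewrite ?big_seq1 ?big_nil.
rewrite forestsS big_flatten big_map spowS /smul big_mkord.
apply: eq_bigr => j _.
rewrite big_allpairs_dep /wsum big_distrl; apply: eq_bigr => t _ /=.
by rewrite -IH big_distrr; apply: eq_bigr => f _; rewrite big_cons.
Qed.

Hypothesis uniq_T : forall m, uniq (T m).
Hypothesis mem_T : forall m t, (t \in T m) = valid t && (leaves t == m).

Lemma mem_forests k m f :
  (f \in forests k m) = [&& size f == k, all valid f & sumn (map leaves f) == m].
Proof.
elim: k m f => [|k IH] m f; first by rewrite forests0; case: m f => [|m] [|t f].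
rewrite forestsS; apply/flatten_mapP/idP => [[j] | ].
  rewrite mem_index_iota => j_le /allpairsP[[t f'] /= [t_in f'_in ->]].
  move: t_in f'_in; rewrite mem_T IH /= => /andP[-> /eqP leaves_t] /and3P[/eqP -> -> /eqP sum_f'].
  by rewrite eqxx; apply/eqP; move: j_le; lia.
case: f => [|t f] // /and3P[/eqP[size_f] valid_tf /eqP sum_f].
rewrite /= in valid_tf sum_f; case/andP: valid_tf => valid_t valid_f.
exists (leaves t); first by rewrite mem_index_iota; lia.
apply/allpairsP; exists (t, f); split=> //=; first by rewrite mem_T valid_t eqxx.
by rewrite IH size_f valid_f eqxx; apply/eqP; lia.
Qed.

Lemma uniq_forests k m : uniq (forests k m).
Proof.
elim: k m => [|k IH] m; first by rewrite forests0; case: (m == 0%N).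
rewrite forestsS; apply: (@uniq_flatten_key _ _ (fun f => leaves (head leaf f))).
  exact: iota_uniq.
  by move=> j _; apply: allpairs_uniq => // -[t f] [t' f'] _ _ [-> ->].
move=> j _ _ /allpairsP[[t f] /= [+ _ ->]].
by rewrite mem_T => /andP[_ /eqP].
Qed.

Definition tree_split (m : nat) : seq tree :=
  (if m == 1%N then [:: leaf] else [::]) ++ [seq Node f | k <- index_iota 0 m, f <- forests k.+2 m].

Lemma mem_tree_split m t : (t \in tree_split m) = valid t && (leaves t == m).
Proof.
rewrite mem_cat; case: t => -[|t f].
  rewrite /= eq_sym; case: eqP => //= _; apply/negbTE/allpairsPdep => -[k [g [_ + [g_nil]]]].
  by rewrite -g_nil mem_forests.
have -> : (Node (t :: f) \in if m == 1%N then [:: leaf] else [::]) = false.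
  by case: (m == 1%N) => //; rewrite inE; apply/eqP.
rewrite valid_node // leaves_node //.
apply/allpairsPdep/idP => [[k [g [_ g_in [g_eq]]]] | ].
  by move: g_in; rewrite -g_eq mem_forests => /and3P[/eqP -> -> ->].
case/andP => /andP[size_ge2 valid_f] sum_f; exists (size (t :: f)).-2, (t :: f); split => //.
  rewrite mem_index_iota; have := size_le_sumn_leaves (t :: f).
  by move: size_ge2 sum_f => /= ? /eqP; lia.
by rewrite mem_forests valid_f sum_f !andbT; move: size_ge2; case: (size (t :: f)) => [|[]].
Qed.

Lemma uniq_tree_split m : uniq (tree_split m).
Proof.
rewrite cat_uniq; apply/and3P; split; first by case: (m == 1%N).
  rewrite has_sym; case: (m == 1%N) => //=; rewrite orbF.
  by apply/allpairsPdep => -[k [f [_ + [f_nil]]]]; rewrite -f_nil mem_forests.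
apply: (@uniq_flatten_key _ _ (fun t => let: Node f := t in (size f).-2)).
- exact: iota_uniq.
- by move=> k _; rewrite map_inj_uniq ?uniq_forests // => f g [].
- by move=> k _ _ /mapP[f + ->]; rewrite mem_forests => /and3P[/eqP -> _ _].
Qed.

Lemma wsum_rec m :
  wsum m = (m == 1%N)%:R + \sum_(k < m) 'X^k * spow wsum k.+2 m.
Proof.
have perm_split : perm_eq (T m) (tree_split m).
  by apply: uniq_perm; rewrite ?uniq_tree_split // => t; rewrite mem_T mem_tree_split.
rewrite {1}/wsum (perm_big _ perm_split) big_cat; congr (_ + _).
  by case: (m == 1%N); rewrite ?big_seq1 ?big_nil.
rewrite big_allpairs_dep big_mkord; apply: eq_bigr => k _.
rewrite -sum_forests big_distrr; apply: eq_big_seq => f.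
rewrite mem_forests => /and3P[/eqP size_f valid_f _].
by rewrite tree_weight_node ?size_f ?subSS ?subn0.
Qed.

End Forests.

(** * Power series modulo x^N *)

(* Q[t][x]: ['X] is x, and t is the constant polynomial [tpar]. *)
Local Notation PP := {poly {poly rat}}.

Definition tpar : PP := 'X%:P.

Definition eqm (N : nat) (p q : PP) : Prop := forall i, (i < N)%N -> p`_i = q`_i.

#[export] Instance eqm_equiv N : Equivalence (eqm N).
Proof.
split=> [p i //|p q eq_pq i /eq_pq //|p q r eq_pq eq_qr i lt_iN].
by rewrite eq_pq ?eq_qr.
Qed.

#[export] Instance add_eqm N : Proper (eqm N ==> eqm N ==> eqm N) (@GRing.add PP).
Proof. by move=> p p' eq_p q q' eq_q i lt_iN; rewrite !coefD eq_p ?eq_q. Qed.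

#[export] Instance opp_eqm N : Proper (eqm N ==> eqm N) (@GRing.opp PP).
Proof. by move=> p p' eq_p i lt_iN; rewrite !coefN eq_p. Qed.

#[export] Instance mul_eqm N : Proper (eqm N ==> eqm N ==> eqm N) (@GRing.mul PP).
Proof.
move=> p p' eq_p q q' eq_q i lt_iN; rewrite !coefM; apply: eq_bigr => -[j lt_ji] _ /=.
by rewrite eq_p ?eq_q //; lia.
Qed.

Lemma eq_eqm N (p q : PP) : p = q -> eqm N p q.
Proof. by move->. Qed.

Lemma coef_exp_lt (p : PP) k i : p`_0 = 0 -> (i < k)%N -> (p ^+ k)`_i = 0.
Proof.
move=> p0; elim: k i => [//|k IH] i lt_ik; rewrite exprS coefM big1 // => -[[|j] lt_ji] _ /=.
  by rewrite p0 mul0r.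
by rewrite IH ?mulr0 //; lia.
Qed.

Lemma exp_eqm0 N (p : PP) : p`_0 = 0 -> eqm N (p ^+ N) 0.
Proof. by move=> p0 i lt_iN; rewrite coef0 coef_exp_lt. Qed.

Lemma geom_sum_eqm N (p : PP) : p`_0 = 0 -> eqm N ((1 - p) * \sum_(k < N) p ^+ k) 1.
Proof.
move=> p0; rewrite -opprB mulNr -subrX1 opprB (exp_eqm0 (N := N) p0) subr0.
reflexivity.
Qed.

Lemma eqm_mul2l N (a p q : PP) : a`_0 = 1 -> eqm N (a * p) (a * q) -> eqm N p q.
Proof.
move=> a0 eq_apq; set S := \sum_(k < N) (1 - a) ^+ k.
have aS1 : eqm N (a * S) 1.
  by rewrite -{1}[a](subKr 1) geom_sum_eqm // coefB coef1 a0 subrr.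
have inv_a r : eqm N (S * (a * r)) r by rewrite mulrA (mulrC S) aS1 mul1r.
by rewrite -(inv_a p) eq_apq inv_a.
Qed.

Lemma eqm_mulX N (p q : PP) : eqm N.+1 ('X * p) ('X * q) <-> eqm N p q.
Proof.
split=> [eq_Xpq i lt_iN | eq_pq [|i] lt_iN]; rewrite ?coefXM //=.
  by have := eq_Xpq i.+1 lt_iN; rewrite !coefXM.
exact: eq_pq.
Qed.

Lemma eqm_tpar2l N (p q : PP) : eqm N (tpar * p) (tpar * q) -> eqm N p q.
Proof.
move=> eq_tpq i /eq_tpq; rewrite !coefCM.
by apply: mulfI; rewrite polyX_eq0.
Qed.

Definition approx (N : nat) (F : series) (p : PP) : Prop := forall i, (i < N)%N -> F i = p`_i.

#[export] Instance approx_eqm N F : Proper (eqm N ==> iff) (approx N F).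
Proof. by move=> p q eq_pq; split=> approx_F i lt_iN; rewrite approx_F ?eq_pq. Qed.

Lemma approx_poly N F : approx N F (\poly_(i < N) F i).
Proof. by move=> i lt_iN; rewrite coef_poly lt_iN. Qed.

Lemma approx_smul N F G p q :
  approx N F p -> approx N G q -> approx N (smul F G) (p * q).
Proof.
move=> approx_F approx_G i lt_iN; rewrite coefM; apply: eq_bigr => -[j lt_ji] _ /=.
by rewrite approx_F ?approx_G //; lia.
Qed.

Lemma approx_spow N F p k : approx N F p -> approx N (spow F k) (p ^+ k).
Proof.
move=> approx_F; elim: k => [|k IH] i lt_iN; first by rewrite coef1; case: i {lt_iN}.
by rewrite spowS exprS (approx_smul approx_F IH).
Qed.

Lemma approx_scomp N (F G : series) (q : PP) : q`_0 = 0 -> approx N G q ->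
  approx N (scomp F G) (\sum_(k < N) (F k)%:P * q ^+ k).
Proof.
move=> q0 approx_G i lt_iN; rewrite coef_sum /scomp.
rewrite (@sum_ord_widen _ i.+1 N (fun k => F k * spow G k i)) // => [|k /andP[lt_ik _]].
  by apply: eq_bigr => k _; rewrite coefCM (approx_spow _ approx_G).
by rewrite (approx_spow _ approx_G) // coef_exp_lt ?mulr0.
Qed.

Definition sgn (F : series) : series := fun m => (-1) ^+ m * F m.

Lemma spow_sgn F k n : spow (sgn F) k n = (-1) ^+ n * spow F k n.
Proof.
elim: k n => [|k IH] n; first by case: n => [|n]; rewrite /= ?expr0 ?mul1r ?mulr0.
rewrite !spowS /smul mulr_sumr; apply: eq_bigr => -[i lt_in] _ /=.
by rewrite IH /sgn mulrACA -exprD subnKC.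
Qed.

Lemma coef_tparXM k (p : PP) i : (tpar ^+ k * p)`_i = 'X^k * p`_i.
Proof. by rewrite /tpar -rmorphXn coefCM. Qed.

(* For [a] = B the recurrence reads B = x + B^2 / (1 - t B); [Y] truncates B(-x). *)
Lemma quadratic_of_rec (a : series) N (Y : PP) :
  (forall m, a m = (m == 1%N)%:R + \sum_(k < m) 'X^k * spow a k.+2 m) ->
  approx N (sgn a) Y -> eqm N ((1 - tpar * Y) * (Y + 'X)) (Y ^+ 2).
Proof.
move=> rec_a; case: N => [//|N] approx_Y.
have Y0 : Y`_0 = 0 by rewrite -approx_Y // /sgn rec_a big_ord0 addr0 mulr0n mulr0.
have rec_sgn m : sgn a m + (m == 1%N)%:R = \sum_(k < m) 'X^k * spow (sgn a) k.+2 m.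
  rewrite /sgn rec_a mulrDr addrAC mulr_sumr.
  have -> : (-1) ^+ m * (m == 1%N)%:R + (m == 1%N)%:R = 0 :> {poly rat}.
    by case: eqP => [->|_]; rewrite ?mulr0 ?addr0 // expr1 mulN1r addNr.
  by rewrite add0r; apply: eq_bigr => k _; rewrite spow_sgn mulrCA.
have rec_Y : eqm N.+1 (Y + 'X) (Y ^+ 2 * \sum_(k < N.+1) (tpar * Y) ^+ k).
  move=> i lt_iN; rewrite coefD coefX -approx_Y // rec_sgn mulr_sumr coef_sum.
  under [RHS]eq_bigr => k _ do
    rewrite exprMn mulrCA -exprD coef_tparXM -(approx_spow _ approx_Y) //.
  apply: (@sum_ord_widen _ i N.+1 (fun k => 'X^k * spow (sgn a) k.+2 i)).
    exact: ltnW.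
  move=> k /andP[le_ik _].
  by rewrite (approx_spow _ approx_Y) // coef_exp_lt ?mulr0 //; lia.
have tY0 : (tpar * Y)`_0 = 0 by rewrite coefCM Y0 mulr0.
rewrite rec_Y mulrCA (geom_sum_eqm (N := N.+1) tY0) mulr1.
reflexivity.
Qed.

Lemma X_mul_fDelta k : 'X * fDelta k = (-1) ^+ k * ((1 + 'X) ^+ k - 1).
Proof.
case: k => [|k]; first by rewrite expr0 subrr !mulr0.
rewrite /fDelta subrX1 [1 + 'X]addrC addrK mulKp ?polyX_eq0 //.
by rewrite mulrCA.
Qed.

(* t f^Delta(y) = 1/(1 + (1 + t) y) - 1/(1 + y), and both geometric series are inverted
   modulo x^N. *)
Lemma fDelta_comp N (F : PP) : F`_0 = 0 ->
  eqm N ((1 + F) * (1 + (1 + tpar) * F) * \sum_(k < N) (fDelta k)%:P * F ^+ k) (- F).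
Proof.
move=> F0; apply: eqm_tpar2l.
set u := - ((1 + tpar) * F); set v := - F.
have sum_t : tpar * \sum_(k < N) (fDelta k)%:P * F ^+ k =
             \sum_(k < N) u ^+ k - \sum_(k < N) v ^+ k.
  rewrite mulr_sumr -sumrB; apply: eq_bigr => k _.
  rewrite mulrA /tpar -polyCM X_mul_fDelta polyCM polyCB !polyC_exp polyCN polyCD polyC1.
  by rewrite /u /v (exprNn ((1 + tpar) * F)) (exprNn F) exprMn; ring.
have u0 : u`_0 = 0 by rewrite coefN coef0M F0 mulr0 oppr0.
have v0 : v`_0 = 0 by rewrite coefN F0 oppr0.
have -> : tpar * ((1 + F) * (1 + (1 + tpar) * F) * \sum_(k < N) (fDelta k)%:P * F ^+ k) =
          (1 - v) * ((1 - u) * \sum_(k < N) u ^+ k) - (1 - u) * ((1 - v) * \sum_(k < N) v ^+ k).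
  by rewrite mulrCA sum_t /u /v; ring.
rewrite (geom_sum_eqm (N := N) u0) (geom_sum_eqm (N := N) v0).
by apply: eq_eqm; rewrite /u /v; ring.
Qed.

Lemma fDelta_closed_form n : smul fDelta
    (fun k => if k == 0%N then 1 else if k == 1%N then 2%:R + 'X
              else if k == 2%N then 1 + 'X else 0) n = - sx n.
Proof.
set Q := fun k => _; set P := \sum_(k < n.+1) (fDelta k)%:P * 'X ^+ k.
have approx_fD : approx n.+1 fDelta P.
  rewrite /P (eq_bigr _ (fun k _ => mul_polyC _ _)) -poly_def; exact: approx_poly.
have approx_Q : approx n.+1 Q ((1 + 'X) * (1 + (1 + tpar) * 'X)).
  have -> : (1 + 'X) * (1 + (1 + tpar) * 'X) = 1 + (2%:R + 'X)%:P * 'X + (1 + 'X)%:P * 'X ^+ 2.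
    by rewrite !polyCD polyC1 /tpar; ring.
  move=> i _; rewrite !coefD coef1 !coefCM coefX coefXn.
  by case: i => [|[|[|i]]]; rewrite /Q /= ?mulr0 ?mulr1 ?addr0 ?add0r.
have := approx_smul approx_fD approx_Q; rewrite mulrC fDelta_comp ?coefX //.
by move=> /(_ n (ltnSn n)) ->; rewrite coefN coefX /sx; case: (n == 1%N).
Qed.

(** * The Stasheff series *)

Section StasheffSeries.

Variable s : nat -> seq tree.
Hypothesis s_enum : forall n, (1 <= n)%N -> enumerates n (s n).

(* T_(m-1) is the set of trees with m leaves. *)
Definition stasheff_trees (m : nat) : seq tree :=
  match m with 0 => [::] | 1 => [:: leaf] | m'.+1 => s m' end.

Lemma mem_stasheff_trees m t : (t \in stasheff_trees m) = valid t && (leaves t == m).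
Proof.
case: m => [|[|m]] /=.
- by move: (leaves_gt0 t); rewrite andbC; case: (leaves t).
- rewrite inE; apply/eqP/andP => [->|[valid_t /eqP]]; last exact: valid_leaves1.
  by rewrite eqxx.
- have [_ in_s] := s_enum (isT : (1 <= m.+1)%N).
  by apply/idP/andP => [/In_mem/in_s[-> ->]|[valid_t /eqP leaves_t]] //; apply/In_mem/in_s.
Qed.

Lemma uniq_stasheff_trees m : uniq (stasheff_trees m).
Proof. by case: m => [|[|m]] //; have [/NoDup_uniq] := s_enum (isT : (1 <= m.+1)%N). Qed.

Let b := wsum stasheff_trees.

Definition fK : series := fun n => if n is 0 then 0 else (-1) ^+ n * pK n (s n).

Lemma fK_wsum n : fK n.+1 = - sgn b n.+2.
Proof.
rewrite /fK /sgn /b /wsum /pK /= [(-1) ^+ n.+2]exprS mulN1r mulNr opprK; congr (_ * _).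
apply: eq_big_seq => t t_in; congr ('X^_).
by move: t_in; rewrite -[s n.+1]/(stasheff_trees n.+2) mem_stasheff_trees => /andP[_ /eqP ->].
Qed.

Definition fKpoly (N : nat) : PP := \poly_(i < N) fK i.

Lemma sgn_wsum_poly N : \poly_(i < N.+2) sgn b i = - 'X * (1 + fKpoly N.+1).
Proof.
apply/polyP => -[|i]; rewrite mulNr coefN coefXM coef_poly //=.
  by rewrite /sgn /b /wsum big_nil mulr0 oppr0.
rewrite ltnS coefD coef1 coef_poly; case: i => [|i] /=.
  by rewrite /sgn /b /wsum big_seq1 /tree_weight subnn expr0 expr1 mulN1r addr0.
by rewrite -/(fK i.+1) fK_wsum add0r; case: ltnP => _; rewrite ?opprK ?oppr0.
Qed.

Lemma fK_quadratic N :
  eqm N ('X * (1 + fKpoly N) * (1 + (1 + tpar) * fKpoly N)) (- fKpoly N).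
Proof.
case: N => [//|N]; set F := fKpoly N.+1.
have := quadratic_of_rec (wsum_rec uniq_stasheff_trees mem_stasheff_trees)
                         (@approx_poly N.+2 (sgn b)).
rewrite sgn_wsum_poly -/F => quad.
(* x times the left side is Y^2 - (1 - t Y)(Y + x) at Y = -x (1 + F). *)
apply/eqm_mulX; rewrite (_ : _ * _ = (- 'X * (1 + F)) ^+ 2 - (1 - tpar * (- 'X * (1 + F))) *
                          (- 'X * (1 + F) + 'X) + 'X * - F); last by ring.
by rewrite quad; apply: eq_eqm; ring.
Qed.

Lemma fDelta_fK_inverse n : scomp fDelta fK n = sx n.
Proof.
set F := fKpoly n.+1.
have F0 : F`_0 = 0 by rewrite coef_poly.
have approx_P := approx_scomp fDelta F0 (@approx_poly n.+1 fK).
have P_X : eqm n.+1 (\sum_(k < n.+1) (fDelta k)%:P * F ^+ k) 'X.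
  apply: (@eqm_mul2l _ ((1 + F) * (1 + (1 + tpar) * F))).
    by rewrite coef0M !coefD coef1 coef0M F0 mulr0 !addr0 mulr1.
  rewrite fDelta_comp // -(@fK_quadratic n.+1) -/F.
  by apply: eq_eqm; ring.
by rewrite P_X in approx_P; rewrite approx_P // coefX /sx; case: (n == 1%N).
Qed.

Definition sqrt_fK : series := fun n =>
  (if n == 0%N then 1 else if n == 1%N then 2%:R + 'X else 0) +
  smul (fun k => if k == 1%N then 2%:R * (1 + 'X) else 0) fK n.

Lemma sqrt_fK0 : sqrt_fK 0 = 1.
Proof. by rewrite /sqrt_fK /smul big_ord1 mul0r addr0. Qed.

Lemma sqrt_fK_sqr n : smul sqrt_fK sqrt_fK n =
  (if n == 0%N then 1 else if n == 1%N then 2%:R * (2%:R + 'X)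
   else if n == 2%N then 'X ^+ 2 else 0).
Proof.
set F := fKpoly n.+1.
set A : PP := 1 + (2%:R + 'X)%:P * 'X; set C : PP := (2%:R * (1 + 'X))%:P * 'X.
have approx_S : approx n.+1 sqrt_fK (A + C * F).
  have approx_C : approx n.+1 (fun k => if k == 1%N then 2%:R * (1 + 'X) else 0) C.
    by move=> [|[|i]] _; rewrite /C coefCM coefX ?mulr0 ?mulr1.
  move=> i lt_in; rewrite coefD -(approx_smul approx_C (@approx_poly n.+1 fK)) //.
  congr (_ + _); case: i {lt_in} => [|[|i]];
    by rewrite /A coefD coef1 coefCM coefX ?mulr0 ?mulr1 ?addr0 ?add0r.
have := approx_smul approx_S approx_S.
rewrite (_ : (A + C * F) * (A + C * F) = 1 + (2%:R * (2%:R + 'X))%:P * 'X + ('X ^+ 2)%:P * 'X ^+ 2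
           + 4%:R * (1 + tpar) * 'X * ('X * (1 + F) * (1 + (1 + tpar) * F) + F)); last first.
  by rewrite /A /C !(polyCD, polyCM, polyC_exp) polyC1 /tpar; ring.
rewrite fK_quadratic -/F => /(_ n (ltnSn n)) ->.
rewrite addNr mulr0 addr0 !coefD coef1 !coefCM coefX coefXn.
by case: n {approx_S F A C} => [|[|[|n]]]; rewrite ?mulr0 ?mulr1 ?addr0 ?add0r.
Qed.

End StasheffSeries.

Theorem corollary4p4 (s : nat -> seq tree)
  (Hs : forall n, (1 <= n)%N -> enumerates n (s n)) :
  let fK : series := fun n => if n is 0 then 0 else (-1) ^+ n * pK n (s n) in
  (exists S : series,
      S 0%N = 1 /\
      (forall n, smul S S n =
         (if n == 0%N then 1 else if n == 1%N then 2%:R * (2%:R + 'X)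
          else if n == 2%N then 'X ^+ 2 else 0)) /\
      (forall n, smul (fun k => if k == 1%N then 2%:R * (1 + 'X) else 0) fK n =
         - (if n == 0%N then 1 else if n == 1%N then 2%:R + 'X else 0) + S n))
  /\
  (forall n, smul fDelta
       (fun k => if k == 0%N then 1 else if k == 1%N then 2%:R + 'X
                 else if k == 2%N then 1 + 'X else 0) n = - sx n)
  /\
  (forall n, scomp fDelta fK n = sx n).
Proof.
move=> fK; split; last by split; [exact: fDelta_closed_form | exact: fDelta_fK_inverse Hs].
exists (sqrt_fK s); split; first exact: sqrt_fK0.
split; first exact: sqrt_fK_sqr Hs.
by move=> n; rewrite /sqrt_fK addKr.
Qed.
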